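(* Let $\mathcal{R}$ be a finite set of axis-parallel rectangles in the plane. Then the piercing graph $H$ of $\mathcal{R}$ is a comparability graph.
   Context: The piercing graph $H=(\mathcal{R},E)$ has an edge $\{R_1,R_2\}$ iff $R_1$ and $R_2$ pierce, i.e., they intersect but neither contains a corner of the other. A graph on vertex set $V$ is a comparability graph if it is obtained from (the transitive closure of) a partial order on $V$ by joining every pair of comparable elements and forgetting directions. *)

From mathcomp Require Import all_boot all_order all_algebra.
From mathcomp Require Import reals.
Set Implicit Arguments. Unset Strict Implicit. Unset Printing Implicit Defensive.
Import Order.TTheory GRing.Theory Num.Theory.
Local Open Scope ring_scope.

Section Rect.
Variable R : realType.

(* A (closed) axis-parallel rectangle [xl, xr] x [yl, yr]. *)
Record rect := Rect { xl : R; xr : R; yl : R; yr : R }.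

Definition rect_valid (r : rect) : Prop := xl r < xr r /\ yl r < yr r.

Definition in_rect (r : rect) (p : R * R) : Prop :=
  xl r <= p.1 <= xr r /\ yl r <= p.2 <= yr r.

Definition corners (r : rect) : seq (R * R) :=
  [:: (xl r, yl r); (xl r, yr r); (xr r, yl r); (xr r, yr r)].

Definition rects_intersect (r1 r2 : rect) : Prop :=
  exists p : R * R, in_rect r1 p /\ in_rect r2 p.

Definition contains_corner_of (r1 r2 : rect) : Prop :=
  exists2 p, p \in corners r2 & in_rect r1 p.

Definition pierce (r1 r2 : rect) : Prop :=
  rects_intersect r1 r2 /\ ~ contains_corner_of r1 r2 /\ ~ contains_corner_of r2 r1.

End Rect.

Definition piercing_graph (R : realType) (T : Type) (rect_of : T -> rect R)
  (x y : T) : Prop := x <> y /\ pierce (rect_of x) (rect_of y).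

Definition comparability_graph (V : Type) (E : V -> V -> Prop) : Prop :=
  exists lt : V -> V -> Prop,
    (forall x, ~ lt x x) /\
    (forall x y z, lt x y -> lt y z -> lt x z) /\
    (forall x y, x <> y -> (E x y <-> (lt x y \/ lt y x))).

From mathcomp Require Import all_boot all_order all_algebra.
From mathcomp Require Import reals.
From mathcomp Require Import lra.
Set Implicit Arguments. Unset Strict Implicit. Unset Printing Implicit Defensive.
Import Order.TTheory GRing.Theory Num.Theory.
Local Open Scope ring_scope.

(* Two rectangles pierce exactly when one of them crosses the other like the
   bars of a plus sign: its x-projection strictly contains the other's and its
   y-projection is strictly contained in the other's.  This "crosses" relation
   is a strict partial order, being a conjunction of strict interval
   inclusions, and its comparability graph is therefore the piercing graph. *)

Lemma overlap_cases (R : realDomainType) (a1 b1 a2 b2 p : R) :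
  a1 <= p <= b1 -> a2 <= p <= b2 ->
  [\/ a1 <= a2 <= b1, a1 <= b2 <= b1 | a2 < a1 /\ b1 < b2].
Proof.
move=> /andP[ap pb] /andP[ap' pb'].
have [a12|a21] := leP a1 a2; first by apply: Or31; apply/andP; split => //; lra.
have [b21|b12] := leP b2 b1; first by apply: Or32; apply/andP; split => //; lra.
exact: Or33.
Qed.

Section Crossing.
Variable R : realType.
Implicit Types a b c : rect R.

Definition crosses a b : Prop :=
  [/\ xl a < xl b, xr b < xr a, yl b < yl a & yr a < yr b].

Lemma crosses_irrefl a : ~ crosses a a.
Proof. by case; rewrite ltxx. Qed.

Lemma crosses_trans a b c : crosses a b -> crosses b c -> crosses a c.
Proof. by case=> ? ? ? ?; case=> ? ? ? ?; split; lra. Qed.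

Lemma no_corner_nested a b p :
  in_rect a p -> in_rect b p -> ~ contains_corner_of a b ->
  (xl b < xl a /\ xr a < xr b) \/ (yl b < yl a /\ yr a < yr b).
Proof.
move=> [xa ya] [xb yb] no_corner.
have corner cx cy : (cx, cy) \in corners b ->
    xl a <= cx <= xr a -> yl a <= cy <= yr a -> False.
  by move=> cb cxa cya; apply: no_corner; exists (cx, cy).
have [xlb|xrb|] := overlap_cases xa xb; last by left.
- have [ylb|yrb|] := overlap_cases ya yb; last by right.
  + by case: (corner (xl b) (yl b)); rewrite ?inE ?eqxx ?orbT.
  + by case: (corner (xl b) (yr b)); rewrite ?inE ?eqxx ?orbT.
- have [ylb|yrb|] := overlap_cases ya yb; last by right.
  + by case: (corner (xr b) (yl b)); rewrite ?inE ?eqxx ?orbT.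
  + by case: (corner (xr b) (yr b)); rewrite ?inE ?eqxx ?orbT.
Qed.

Lemma pierceC a b : pierce a b -> pierce b a.
Proof. by case=> -[p [pa pb]] [nab nba]; split; first exists p. Qed.

Lemma crosses_pierce a b :
  rect_valid a -> rect_valid b -> crosses a b -> pierce a b.
Proof.
move=> [va1 va2] [vb1 vb2] [c1 c2 c3 c4]; split; [|split].
- by exists (xl b, yl a); split; split; apply/andP; split => /=; lra.
- by case=> q; rewrite !inE => /or4P[] /eqP-> [_ /andP[]] /=; lra.
- by case=> q; rewrite !inE => /or4P[] /eqP-> [/andP[]] /=; lra.
Qed.

Lemma pierce_crosses a b : pierce a b -> crosses a b \/ crosses b a.
Proof.
move=> [[p [pa pb]] [nab nba]].
have := no_corner_nested pa pb nab; have := no_corner_nested pb pa nba.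
move: pa pb => [/andP[? ?] /andP[? ?]] [/andP[? ?] /andP[? ?]].
by case=> -[? ?] [] [? ?]; [lra | left | right | lra]; split.
Qed.

End Crossing.

Theorem theorem2 (R : realType) (T : finType) (rect_of : T -> rect R)
  (Hinj : injective rect_of) (Hvalid : forall t, rect_valid (rect_of t)) :
  comparability_graph (piercing_graph rect_of).
Proof.
exists (fun x y => crosses (rect_of x) (rect_of y)); split; [|split].
- by move=> x; apply: crosses_irrefl.
- by move=> x y z; apply: crosses_trans.
- move=> x y xy; split; first by case=> _ /pierce_crosses.
  by case=> cross; split=> //; [|apply: pierceC]; apply: crosses_pierce cross.
Qed.
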